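(* Let $B=2^{k_1}C_1\perp\cdots\perp2^{k_r}C_r\in\mathcal H_n(\mathfrak o)$ be a pre-optimal form, $B_1=2^{k_1}C_1\perp\cdots\perp2^{k_{r-1}}C_{r-1}$, $B_2=2^{k_r}C_r$, $n_1=\deg B_1$, $n_2=\deg B_2$ (so $n=n_1+n_2$), and $\mathrm{GK}(B)=(\mathrm{GK}(B)_1,\ldots,\mathrm{GK}(B)_n)$. Then: (1) $(\mathrm{GK}(B)_1,\ldots,\mathrm{GK}(B)_{n_1})\preceq\mathrm{GK}(B_1)$ in the lexicographic order; (2) if there are integers $b_{n_1+1},\ldots,b_{n_1+n_2}$ such that $(\mathrm{GK}(B_1),b_{n_1+1},\ldots,b_{n_1+n_2})\in\mathbf S(\{B\})$, then $\mathrm{GK}(B_1)=(\mathrm{GK}(B)_1,\ldots,\mathrm{GK}(B)_{n_1})$.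
   Context: Let $F$ be a finite unramified extension of $\mathbb Q_2$ with ring of integers $\mathfrak o$, $\mathrm{ord}$ the valuation with $\mathrm{ord}(2)=1$, $\mathrm{ord}(0)=+\infty$. $\mathcal H_n(\mathfrak o)$ is the set of symmetric $B=(b_{ij})\in M_n(F)$ with $b_{ii}\in\mathfrak o$, $2b_{ij}\in\mathfrak o$. $\perp$ is block-diagonal sum. For nondegenerate $B$ of degree $n$: $D_B=(-4)^{[n/2]}\det B$; $\xi_B=1,-1,0$ according as $D_B\in F^{\times2}$, $F(\sqrt{D_B})/F$ unramified quadratic, or ramified. $S_2(\mathfrak o)_e$: symmetric $2\times2$ matrices over $\mathfrak o$ with diagonal in $2\mathfrak o$; unimodular diagonal: diagonal with unit entries. GK invariant: $S(B)$ = set of non-decreasing $(a_i)\in\mathbb Z_{\ge0}^n$ with $\mathrm{ord}(b_{ii})\ge a_i$, $\mathrm{ord}(2b_{ij})\ge(a_i+a_j)/2$ ($1\le i\le j\le n$); $\mathbf S(\{B\})=\bigcup_{U\in GL_n(\mathfrak o)}S({}^tUBU)$; $\mathrm{GK}(B)$ is its greatest element for the lexicographic order $\preceq$. Pre-optimal forms: $B=2^{k_1}C_1\perp\cdots\perp2^{k_r}C_r$ with $k_i\ge0$, each $C_i$ unimodular diagonal or in $\frac12(S_2(\mathfrak o)_e\cap GL_2(\mathfrak o))$; $B^{[j]}=2^{k_1}C_1\perp\cdots\perp2^{k_j}C_j$; $\mathcal D_m=\{j:k_j=m,C_j\text{ diagonal}\}$, $\mathcal E_m=\{j:k_j=m,C_j\text{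 not diagonal}\}$. Pre-optimal means: (PO1) $\sum_{j\in\mathcal D_m}\deg C_j\le2$ and $\mathcal E_m$ is a (possibly empty) set of consecutive integers, for each $m$; (PO2) for $i<j$: $i\in\mathcal D_{m_1},j\in\mathcal D_{m_2}\Rightarrow m_1\le m_2$; $i\in\mathcal E_{m_1},j\in\mathcal E_{m_2}\Rightarrow m_1\le m_2$; $i\in\mathcal D_{m_1},j\in\mathcal E_{m_2}\Rightarrow m_1\le m_2-1$; $i\in\mathcal E_{m_1},j\in\mathcal D_{m_2}\Rightarrow m_1\le m_2+1$; (PO3) if $C_i$ is unimodular diagonal of degree 2 then $i\ge2$ and either ($\deg B^{[i]}$ even and $\xi_{B^{[i-1]}}=\xi_{B^{[i]}}=0$) or ($\deg B^{[i-1]}$ odd and $\mathrm{ord}\det B^{[i-1]}+k_i$ even); (PO4) if $k_i=k_{i-1}-1$, $C_i$ diagonal, $C_{i-1}$ not diagonal, then $\deg C_i=2$, or $\deg C_i=1$ and either ($\deg B^{[i]}$ and $\mathrm{ord}\det B^{[i]}$ even) or ($\deg B^{[i]}$ odd and $\xi_{B^{[i-1]}}=0$); (PO5) if $C_i$ diagonal, $C_{i+1}$ not diagonal, $k_i=k_{i+1}-1$, then $\deg C_i=1$ and either ($\deg B^{[i]}$ even and $\mathrm{ord}\det B^{[i]}$ odd) or ($\deg B^{[i]}$ odd and $\xi_{B^{[i-1]}}\ne0$ if $i\ge2$); (PO6) if $\deg B^{[i]}$ even, $C_i,C_{i+1}$ unimodular diagonal, $k_{i+1}=k_i+1$, then $\xi_{B^{[i]}}=0$.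 *)

From HB Require Import structures.
From mathcomp Require Import all_boot all_order all_algebra.
From Stdlib Require Import ClassicalEpsilon.
Set Implicit Arguments. Unset Strict Implicit. Unset Printing Implicit Defensive.
Import Order.TTheory GRing.Theory Num.Theory.
Local Open Scope ring_scope.

Section Dyadic.
Variables (F : fieldType) (v : F -> int).

(* ord x >= m, with ord 0 = +oo *)
Definition ordge (x : F) (m : int) : bool := (x == 0) || (m <= v x).
(* 2 * ord x >= m  (used for ord x >= m/2) *)
Definition ordge2 (x : F) (m : int) : bool := (x == 0) || (m <= 2 * v x).

Definition inO (x : F) : bool := ordge x 0.
Definition isunit (x : F) : bool := (x != 0) && (v x == 0).

(* F is a complete discretely valued field with valuation v (v(2)=1, so it is
   unramified over Q_2 and of characteristic 0) and finite residue field: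
   i.e. F is a finite unramified extension of Q_2 with normalized valuation v. *)
Record dyadic_field : Prop := {
  v_mul : forall x y, x != 0 -> y != 0 -> v (x * y) = v x + v y;
  v_add : forall x y, x != 0 -> y != 0 -> x + y != 0 ->
            (v x <= v (x + y)) || (v y <= v (x + y));
  v_two : v 2 = 1;
  v_complete : forall u : nat -> F,
     (forall m : int, exists N, forall i j, (N <= i)%N -> (N <= j)%N -> ordge (u i - u j) m) ->
     exists l, forall m : int, exists N, forall i, (N <= i)%N -> ordge (u i - l) m;
  v_residue_finite : exists s : seq F, (forall y, y \in s -> inO y) /\
     (forall x, inO x -> exists2 y, y \in s & ordge (x - y) 1)
}.

(* BD k u  = 2^k * diag(u)            (unimodular diagonal C, u units)
   BE k a b c = 2^k * [[a, b/2],[b/2, c]]   (C in 1/2 (S_2(o)_e cap GL_2(o))) *)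
Inductive blk := BD of nat & seq F | BE of nat & F & F & F.

Definition bk (b : blk) : nat := match b with BD k _ => k | BE k _ _ _ => k end.
Definition bdeg (b : blk) : nat := match b with BD _ u => size u | BE _ _ _ _ => 2 end.
Definition isD (b : blk) : bool := if b is BD _ _ then true else false.

Definition blk_ok (b : blk) : bool :=
  match b with
  | BD _ u => (0 < size u)%N && all isunit u
  | BE _ a b c => [&& inO a, isunit b & inO c]
  end.

Definition bent (b : blk) (i j : nat) : F :=
  match b with
  | BD k u => if i == j then 2 ^+ k * nth 0 u i else 0
  | BE k a b c => 2 ^+ k * (if i == j then (if i == 0%N then a else c) else b / 2)
  end.

Fixpoint ent (bs : seq blk) (i j : nat) : F :=
  match bs with
  | [::] => 0
  | b :: bs' => let d := bdeg b in
      if (i < d)%N && (j < d)%N then bent b i j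
      else if (d <= i)%N && (d <= j)%N then ent bs' (i - d) (j - d) else 0
  end.

Definition degs (bs : seq blk) : nat := sumn (map bdeg bs).

Definition mxOf (bs : seq blk) : 'M[F]_(degs bs) := \matrix_(i, j) ent bs i j.

Definition square (D : F) : Prop := exists x, D = x * x.
(* F(sqrt D)/F unramified: the extension of v to F(sqrt D), namely
   w(a + b sqrt D) = v(a^2 - D b^2)/2, has value group Z (e = 1). *)
Definition unram (D : F) : Prop :=
  forall a b : F, (a != 0) || (b != 0) -> ~~ odd `|v (a ^+ 2 - D * b ^+ 2)|%N.
Definition xi (D : F) : int :=
  if excluded_middle_informative (square D) then 1
  else if excluded_middle_informative (unram D) then -1 else 0.
Definition DB (n : nat) (B : 'M[F]_n) : F := (-4) ^+ (n./2) * \det B.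
Definition xiB (bs : seq blk) : int := xi (DB (mxOf bs)).
Definition orddet (bs : seq blk) : int := v (\det (mxOf bs)).
Definition evenz (z : int) : bool := ~~ odd `|z|%N.

(* ---------- pre-optimal (blocks indexed 0..r-1; paper's C_{i+1} = nth i) ---------- *)
Section PO.
Variable bs : seq blk.
Let r := size bs.
Let C i := nth (BD 0 [::]) bs i.
Let k i := bk (C i).
Let inDm (m j : nat) := (j < r)%N && isD (C j) && (k j == m).
Let inEm (m j : nat) := (j < r)%N && ~~ isD (C j) && (k j == m).

Definition PO1 : Prop := forall m : nat,
  (\sum_(j < r | inDm m j) bdeg (C j) <= 2)%N /\
  (forall i j l, inEm m i -> inEm m j -> (i <= l <= j)%N -> inEm m l).

Definition PO2 : Prop := forall i j, (i < j < r)%N ->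
  [/\ isD (C i) -> isD (C j) -> (k i <= k j)%N,
      ~~ isD (C i) -> ~~ isD (C j) -> (k i <= k j)%N,
      isD (C i) -> ~~ isD (C j) -> (k i + 1 <= k j)%N &
      ~~ isD (C i) -> isD (C j) -> (k i <= k j + 1)%N].

(* paper's index i is i+1 here: B^[i] = take i.+1 bs, B^[i-1] = take i bs *)
Definition PO3 : Prop := forall i, (i < r)%N -> isD (C i) -> bdeg (C i) = 2%N ->
  (1 <= i)%N /\
  ((~~ odd (degs (take i.+1 bs)) /\ xiB (take i bs) = 0 /\ xiB (take i.+1 bs) = 0) \/
   (odd (degs (take i bs)) /\ evenz (orddet (take i bs) + (k i)%:Z))).

Definition PO4 : Prop := forall i, (1 <= i < r)%N ->
  (k i)%:Z = (k i.-1)%:Z - 1 -> isD (C i) -> ~~ isD (C i.-1) ->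
  bdeg (C i) = 2%N \/
  (bdeg (C i) = 1%N /\
   ((~~ odd (degs (take i.+1 bs)) /\ evenz (orddet (take i.+1 bs))) \/
    (odd (degs (take i.+1 bs)) /\ xiB (take i bs) = 0))).

Definition PO5 : Prop := forall i, (i.+1 < r)%N ->
  isD (C i) -> ~~ isD (C i.+1) -> (k i)%:Z = (k i.+1)%:Z - 1 ->
  bdeg (C i) = 1%N /\
  ((~~ odd (degs (take i.+1 bs)) /\ ~~ evenz (orddet (take i.+1 bs))) \/
   (odd (degs (take i.+1 bs)) /\ ((1 <= i)%N -> xiB (take i bs) <> 0))).

Definition PO6 : Prop := forall i, (i.+1 < r)%N ->
  ~~ odd (degs (take i.+1 bs)) -> isD (C i) -> isD (C i.+1) ->
  k i.+1 = (k i).+1 -> xiB (take i.+1 bs) = 0.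

Definition preoptimal : Prop :=
  all blk_ok bs /\ PO1 /\ PO2 /\ PO3 /\ PO4 /\ PO5 /\ PO6.
End PO.

Definition inS (n : nat) (B : 'M[F]_n) (a : seq nat) : Prop :=
  [/\ size a = n, sorted leq a &
      forall i j : 'I_n, (i <= j)%N ->
        ordge (B i i) (nth 0%N a i)%:Z /\
        ordge2 (2 * B i j) ((nth 0%N a i)%:Z + (nth 0%N a j)%:Z)].

Definition inGLo (n : nat) (U : 'M[F]_n) : Prop :=
  (forall i j, inO (U i j)) /\ isunit (\det U).

Definition SS (n : nat) (B : 'M[F]_n) (a : seq nat) : Prop :=
  exists U : 'M[F]_n, inGLo U /\ inS (U^T *m B *m U) a.

End Dyadic.

(* lexicographic order (for sequences of equal length) *)
Fixpoint lexle (s t : seq nat) : bool :=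
  match s, t with
  | [::], _ => true
  | x :: s', [::] => false
  | x :: s', y :: t' => (x < y)%N || ((x == y) && lexle s' t')
  end.

Definition isGK (F : fieldType) (v : F -> int) (n : nat) (B : 'M[F]_n) (g : seq nat) : Prop :=
  SS v B g /\ forall a, SS v B a -> lexle a g.

From mathcomp Require Import all_boot all_order all_algebra.
From mathcomp Require Import perm zify ring.
Set Implicit Arguments. Unset Strict Implicit. Unset Printing Implicit Defensive.
Import Order.TTheory GRing.Theory Num.Theory.
Local Open Scope ring_scope.

(* Let B1 be the leading n1 x n1 block of a symmetric B.  Truncating any a in
   S({B}) to its first n1 entries gives an element of S({B1}).  Indeed, say a
   lies in S(B') with B' = tU B U, and write the inclusion E of o^n1 into o^n
   as E = U X with X integral.  Column reduction over the valuation ring,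
   pivoting on an entry of least valuation, gives V in GL_n1(o) such that
   Y = X V is lower triangular, and tV B1 V = tY B' Y.  Column i of Y only
   involves rows p >= i, where a_p >= a_i, so tY B' Y satisfies the bounds
   defining S for (a_1, ..., a_n1); on the diagonal the cross terms come in
   pairs y_p y_q (2 b_pq), which is what makes this work at the prime 2.
   For GK(B) this is (1).  In (2), GK(B1) ++ b <= GK(B) gives the reverse
   inequality, and the lexicographic order is antisymmetric. *)

Lemma sum_diag_pairs (V : nmodType) N (f : 'I_N -> 'I_N -> V) :
  \sum_(q < N) \sum_(p < N) f p q =
  \sum_(p < N) f p p + \sum_(q < N) \sum_(p < N | (p < q)%N) (f p q + f q p).
Proof.
have split_col q : \sum_(p < N) f p q =
    f q q + (\sum_(p < N | (p < q)%N) f p q + \sum_(p < N | (q < p)%N) f p q).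
  rewrite (bigD1 q) //=; congr (_ + _); rewrite (bigID (fun p : 'I_N => (p < q)%N)) /=.
  by congr (_ + _); apply: eq_bigl => p; rewrite -(inj_eq val_inj) /=; case: ltngtP.
rewrite (eq_bigr _ (fun q _ => split_col q)) big_split /=; congr (_ + _).
rewrite big_split; under [RHS]eq_bigr do rewrite big_split.
rewrite big_split /=; congr (_ + _).
by rewrite (exchange_big_dep xpredT).
Qed.

Section Valuation.
Variables (F : fieldType) (v : F -> int).
Hypothesis HF : dyadic_field v.

Lemma v1 : v 1 = 0.
Proof.
have := v_mul HF (oner_neq0 F) (oner_neq0 F); rewrite mulr1 => v11.
by apply: (addrI (v 1)); rewrite addr0 -v11.
Qed.

Lemma vN1 : v (-1) = 0.
Proof.
have N1_neq0 : (-1 : F) != 0 by rewrite oppr_eq0 oner_neq0.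
have := v_mul HF N1_neq0 N1_neq0; rewrite mulN1r opprK v1 => vN1N1.
have : v (-1) *+ 2 == 0 by rewrite mulr2n -vN1N1.
by rewrite mulrn_eq0 => /eqP.
Qed.

Lemma vN x : x != 0 -> v (- x) = v x.
Proof.
have N1_neq0 : (-1 : F) != 0 by rewrite oppr_eq0 oner_neq0.
by move=> x_neq0; rewrite -mulN1r (v_mul HF N1_neq0 x_neq0) vN1 add0r.
Qed.

Lemma vV x : x != 0 -> v x^-1 = - v x.
Proof.
move=> x_neq0; have := v_mul HF x_neq0 (invr_neq0 x_neq0).
by rewrite mulfV // v1 => /eqP; rewrite eq_sym addrC addr_eq0 => /eqP.
Qed.

Lemma isunit1 : isunit v 1.
Proof. by rewrite /isunit oner_neq0 v1. Qed.

Lemma isunit_sign (k : nat) : isunit v ((-1) ^+ k).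
Proof.
rewrite -signr_odd; case: odd; rewrite ?expr0 ?expr1 ?isunit1 //.
by rewrite /isunit oppr_eq0 oner_neq0 vN1.
Qed.

Lemma isunitM x y : isunit v x -> isunit v y -> isunit v (x * y).
Proof.
case/andP=> x_neq0 /eqP vx /andP [y_neq0 /eqP vy].
by rewrite /isunit mulf_neq0 //= (v_mul HF x_neq0 y_neq0) vx vy.
Qed.

Lemma ordge0 m : ordge v 0 m.
Proof. by rewrite /ordge eqxx. Qed.

Lemma ordge_unit x : isunit v x -> inO v x.
Proof. by case/andP=> _ /eqP vx; rewrite /inO /ordge vx lexx orbT. Qed.

Lemma ordgeW x m m' : m' <= m -> ordge v x m -> ordge v x m'.
Proof.
by rewrite /ordge => le_m'm /orP [->|le_mv] //; rewrite (le_trans le_m'm le_mv) orbT.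
Qed.

Lemma ordgeD x y m : ordge v x m -> ordge v y m -> ordge v (x + y) m.
Proof.
rewrite /ordge; have [->|x_neq0] := eqVneq x 0; first by rewrite add0r => _.
have [->|y_neq0] := eqVneq y 0; first by rewrite addr0 => /= vx _; rewrite vx orbT.
have [->|xy_neq0] //= := eqVneq (x + y) 0.
by move=> mx my; case/orP: (v_add HF x_neq0 y_neq0 xy_neq0); apply: le_trans.
Qed.

Lemma ordgeN x m : ordge v x m -> ordge v (- x) m.
Proof.
rewrite /ordge; have [->|x_neq0] := eqVneq x 0; first by rewrite oppr0 eqxx.
by rewrite /= (vN x_neq0) oppr_eq0 (negbTE x_neq0).
Qed.

Lemma ordgeM x y m m' : ordge v x m -> ordge v y m' -> ordge v (x * y) (m + m').
Proof.
rewrite /ordge; have [->|x_neq0] := eqVneq x 0; first by rewrite mul0r eqxx.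
have [->|y_neq0] := eqVneq y 0; first by rewrite mulr0 eqxx.
by rewrite /= (v_mul HF x_neq0 y_neq0) (negbTE (mulf_neq0 x_neq0 y_neq0)); apply: lerD.
Qed.

Lemma inOM x y : inO v x -> inO v y -> inO v (x * y).
Proof. by move=> ox oy; have := ordgeM ox oy; rewrite addr0. Qed.

Lemma ordge_div x y : x != 0 -> ordge v y (v x) -> inO v (y / x).
Proof.
move=> x_neq0 vy.
have vxV : ordge v x^-1 (- v x) by rewrite /ordge (vV x_neq0) lexx orbT.
by have := ordgeM vy vxV; rewrite subrr.
Qed.

Lemma ordge_sum (I : Type) (r : seq I) (P : pred I) (G : I -> F) m :
  (forall i, P i -> ordge v (G i) m) -> ordge v (\sum_(i <- r | P i) G i) m.
Proof.
move=> mG; apply: (big_ind (fun z => ordge v z m)) => //; first exact: ordge0.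
by move=> x y; exact: ordgeD.
Qed.

Lemma inO_prod (I : Type) (r : seq I) (P : pred I) (G : I -> F) :
  (forall i, P i -> inO v (G i)) -> inO v (\prod_(i <- r | P i) G i).
Proof.
move=> oG; apply: (big_ind (fun z => inO v z)) => //; first exact: ordge_unit isunit1.
by move=> x y; exact: inOM.
Qed.

Lemma ordge2W x m m' : m' <= m -> ordge2 v x m -> ordge2 v x m'.
Proof.
by rewrite /ordge2 => le_m'm /orP [->|le_mv] //; rewrite (le_trans le_m'm le_mv) orbT.
Qed.

Lemma ordge2D x y m : ordge2 v x m -> ordge2 v y m -> ordge2 v (x + y) m.
Proof.
rewrite /ordge2; have [->|x_neq0] := eqVneq x 0; first by rewrite add0r => _.
have [->|y_neq0] := eqVneq y 0; first by rewrite addr0 => /= vx _; rewrite vx orbT.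
have [->|xy_neq0] //= := eqVneq (x + y) 0.
move=> mx my; case/orP: (v_add HF x_neq0 y_neq0 xy_neq0) => le_v.
  by apply: le_trans mx _; rewrite ler_pM2l.
by apply: le_trans my _; rewrite ler_pM2l.
Qed.

Lemma ordge2M x y m m' : ordge2 v x m -> ordge v y m' -> ordge2 v (x * y) (m + 2 * m').
Proof.
rewrite /ordge2 /ordge; have [->|x_neq0] := eqVneq x 0; first by rewrite mul0r eqxx.
have [->|y_neq0] := eqVneq y 0; first by rewrite mulr0 eqxx.
rewrite /= (v_mul HF x_neq0 y_neq0) (negbTE (mulf_neq0 x_neq0 y_neq0)) /= => mx my.
by rewrite mulrDr lerD // ler_pM2l.
Qed.

Lemma ordge2_sum (I : Type) (r : seq I) (P : pred I) (G : I -> F) m :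
  (forall i, P i -> ordge2 v (G i) m) -> ordge2 v (\sum_(i <- r | P i) G i) m.
Proof.
move=> mG; apply: (big_ind (fun z => ordge2 v z m)) => //; first by rewrite /ordge2 eqxx.
by move=> x y; exact: ordge2D.
Qed.

Lemma ordge2_half x m : ordge2 v x (m + m) -> ordge v x m.
Proof. by rewrite /ordge2 /ordge => /orP [->|le_m2v] //; apply/orP; right; lia. Qed.

Definition integral_mx m n (A : 'M[F]_(m, n)) := forall i j, inO v (A i j).

Lemma integral_mx1 n : integral_mx (1%:M : 'M[F]_n).
Proof.
move=> i j; rewrite mxE; case: (i == j); rewrite ?mulr1n ?mulr0n; last exact: ordge0.
exact: ordge_unit isunit1.
Qed.

Lemma integral_mxM m n p (A : 'M[F]_(m, n)) (B : 'M[F]_(n, p)) :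
  integral_mx A -> integral_mx B -> integral_mx (A *m B).
Proof. by move=> oA oB i j; rewrite mxE; apply: ordge_sum => k _; apply: inOM. Qed.

Lemma integral_det n (A : 'M[F]_n) : integral_mx A -> inO v (\det A).
Proof.
move=> oA; apply: ordge_sum => s _; apply: inOM; first exact/ordge_unit/isunit_sign.
by apply: inO_prod => i _.
Qed.

Lemma integral_invmx n (U : 'M[F]_n) : inGLo v U -> integral_mx (invmx U).
Proof.
case=> oU /andP [detU_neq0 /eqP v_detU] i j.
rewrite /invmx unitmxE unitfE detU_neq0 !mxE -[(\det U)^-1]div1r; apply: inOM.
  by apply: ordge_div => //; rewrite v_detU; exact: ordge_unit isunit1.
apply: inOM; first exact/ordge_unit/isunit_sign.
by apply: integral_det => a b; rewrite !mxE.
Qed.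

Lemma inGLo1 n : inGLo v (1%:M : 'M[F]_n).
Proof. by split; [exact: integral_mx1 | rewrite det1; exact: isunit1]. Qed.

Lemma inGLoM n (A B : 'M[F]_n) : inGLo v A -> inGLo v B -> inGLo v (A *m B).
Proof.
by case=> oA uA [oB uB]; split; [exact: integral_mxM | rewrite det_mulmx isunitM].
Qed.

Lemma inGLo_perm n (s : 'S_n) : inGLo v (perm_mx s : 'M[F]_n).
Proof.
split; last by rewrite det_perm; exact: isunit_sign.
by move=> i j; rewrite mxE; exact: integral_mx1.
Qed.

Lemma inGLo_unitriangular n (N : 'M[F]_n) :
  integral_mx N -> (forall i j : 'I_n, (j <= i)%N -> N i j = 0) ->
  inGLo v (1%:M - N).
Proof.
move=> oN N_upper; split=> [i j|].
  have -> : (1%:M - N) i j = 1%:M i j - N i j by rewrite !mxE.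
  by apply: ordgeD; [exact: integral_mx1 | exact/ordgeN/oN].
rewrite -det_tr det_trig; last first.
  apply/is_trig_mxP => i j lt_ij; rewrite !mxE (N_upper j i (ltnW lt_ij)) subr0.
  by rewrite (_ : j == i = false) //; apply/negbTE; rewrite neq_ltn lt_ij orbT.
rewrite big1 => [|i _]; first exact: isunit1.
by rewrite !mxE eqxx N_upper // subr0.
Qed.

Definition trig_rows m n k (Y : 'M[F]_(m, n)) :=
  forall (p : 'I_m) (s : 'I_n), (p < k)%N -> (p < s)%N -> Y p s = 0.

Lemma mulmx_tperm_mxE m n (Y : 'M[F]_(m, n)) (c c' : 'I_n) i j :
  (Y *m perm_mx (tperm c c')) i j = Y i (tperm c c' j).
Proof. by rewrite -[tperm c c']tpermV -col_permE mxE tpermV. Qed.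

Lemma trig_rows_swap m n k (Y : 'M[F]_(m, n)) (c c' : 'I_n) :
  (k <= c)%N -> (k <= c')%N -> trig_rows k Y ->
  trig_rows k (Y *m perm_mx (tperm c c')).
Proof.
move=> le_kc le_kc' Ytrig p s lt_pk lt_ps; rewrite mulmx_tperm_mxE; apply: Ytrig => //.
by case: tpermP => [_|_|_ _]; [exact: leq_trans le_kc' | exact: leq_trans le_kc |].
Qed.

Lemma trig_rows_pivot m n k (Z : 'M[F]_(m, n)) (r : 'I_m) (c : 'I_n) :
  r = k :> nat -> c = k :> nat -> trig_rows k Z -> Z r c != 0 ->
  (forall j : 'I_n, (k < j)%N -> ordge v (Z r j) (v (Z r c))) ->
  exists2 W, inGLo v W & trig_rows k.+1 (Z *m W).
Proof.
move=> rk ck Ztrig Zrc_neq0 Zrc_min.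
pose N := \matrix_(i, j) (((i == c) && (k < j)%N)%:R * (Z r j / Z r c)) : 'M[F]_n.
exists (1%:M - N).
  apply: inGLo_unitriangular => [i j|i j le_ji]; rewrite mxE.
    have [/andP [_ lt_kj]|_] := boolP (_ && _); last by rewrite mul0r; exact: ordge0.
    by rewrite mul1r; apply: ordge_div => //; apply: Zrc_min.
  have [ic|] := eqVneq i c; last by rewrite mul0r.
  by rewrite -ck -ic ltnNge le_ji mul0r.
move=> p s lt_pk1 lt_ps.
have -> : (Z *m (1%:M - N)) p s = Z p s - Z p c * N c s.
  rewrite mulmxBr mulmx1 [LHS]mxE [X in _ + X = _]mxE; congr (_ - _).
  rewrite mxE (bigD1 c) //= big1 ?addr0 // => i /negbTE ic.
  by rewrite [N i s]mxE ic mul0r mulr0.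
have [lt_pk|le_kp] := ltnP p k.
  by rewrite (Ztrig p s) ?(Ztrig p c) ?ck // mul0r subr0.
have pr : p = r by apply: val_inj => /=; lia.
have lt_ks : (k < s)%N by rewrite -rk -pr.
by rewrite pr mxE eqxx lt_ks mul1r mulrC divfK // subrr.
Qed.

Lemma trig_rows_step m n k (Y : 'M[F]_(m, n)) :
  trig_rows k Y -> exists2 W, inGLo v W & trig_rows k.+1 (Y *m W).
Proof.
move=> Ytrig.
have W1 : trig_rows k.+1 Y -> exists2 W, inGLo v W & trig_rows k.+1 (Y *m W).
  by exists 1%:M; rewrite ?mulmx1 //; exact: inGLo1.
have [lt_km|le_mk] := ltnP k m; last first.
  by apply: W1 => p s _; apply: Ytrig; have := ltn_ord p; lia.
have [lt_kn|le_nk] := ltnP k n; last first.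
  by apply: W1 => p s _ lt_ps; apply: Ytrig => //; have := ltn_ord s; lia.
pose r := Ordinal lt_km; pose c := Ordinal lt_kn.
pose P := [pred s : 'I_n | (k <= s)%N && (Y r s != 0)].
have [s1 Ps1|P0] := pickP P; last first.
  apply: W1 => p s lt_pk1 lt_ps; have [lt_pk|le_kp] := ltnP p k; first exact: Ytrig.
  have -> : p = r by apply: val_inj => /=; lia.
  by move: (P0 s); rewrite /= (leq_trans le_kp (ltnW lt_ps)) => /negbFE/eqP.
case: (arg_minP (fun s => v (Y r s)) Ps1) => s0 /andP [le_ks0 Yrs0_neq0] s0_min.
have [W W_GLo YW_trig] :
    exists2 W, inGLo v W & trig_rows k.+1 (Y *m perm_mx (tperm c s0) *m W).
  apply: (@trig_rows_pivot _ _ _ _ r c) => //; first exact: trig_rows_swap.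
    by rewrite mulmx_tperm_mxE tpermL.
  move=> j lt_kj; rewrite !mulmx_tperm_mxE tpermL.
  have [->|Ytj_neq0] := eqVneq (Y r (tperm c s0 j)) 0; first exact: ordge0.
  rewrite /ordge (negbTE Ytj_neq0) s0_min //= Ytj_neq0 andbT.
  by case: tpermP => // _ _; exact: ltnW.
exists (perm_mx (tperm c s0) *m W); last by rewrite mulmxA.
exact: inGLoM (inGLo_perm _) W_GLo.
Qed.

Lemma col_reduce_trig m n (Y : 'M[F]_(m, n)) :
  exists2 W, inGLo v W & is_trig_mx (Y *m W).
Proof.
suff /(_ m) [W W_GLo YW_trig] : forall k, exists2 W, inGLo v W & trig_rows k (Y *m W).
  by exists W => //; apply/is_trig_mxP => i j; exact: YW_trig.
elim=> [|k [W W_GLo YW_trig]]; first by exists 1%:M; [exact: inGLo1 | ].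
have [W' W'_GLo YWW'_trig] := trig_rows_step YW_trig.
by exists (W *m W'); [exact: inGLoM | rewrite mulmxA].
Qed.

Section TrigCongruence.
Variables (n n1 : nat) (B : 'M[F]_n) (a : seq nat) (Y : 'M[F]_(n, n1)).
Hypotheses (Bsym : B^T = B) (aB : inS v B a).
Hypotheses (Yo : integral_mx Y) (Ytrig : is_trig_mx Y).

Let A (i : nat) : int := (nth 0%N a i)%:Z.

Lemma inS_diag (p : 'I_n) : ordge v (B p p) (A p).
Proof. by case: aB => _ _ /(_ p p (leqnn _)) []. Qed.

Lemma inS_offdiag (p q : 'I_n) : ordge2 v (2 * B p q) (A p + A q).
Proof.
case: aB => _ _ aBpq; have [le_pq|lt_qp] := leqP p q; first by case: (aBpq p q le_pq).
have -> : B p q = B q p by rewrite -[in LHS]Bsym mxE.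
by rewrite addrC; case: (aBpq q p (ltnW lt_qp)).
Qed.

Lemma trig_support (p : 'I_n) (i : 'I_n1) : Y p i = 0 \/ A i <= A p.
Proof.
have [lt_pi|le_ip] := ltnP p i; first by left; move/is_trig_mxP: Ytrig; apply.
right; case: aB => size_a sorted_a _; rewrite lez_nat.
apply: (sorted_leq_nth leq_trans leqnn 0%N sorted_a) => //; rewrite inE size_a //.
exact: leq_ltn_trans le_ip (ltn_ord p).
Qed.

Lemma congr_mxE (i j : 'I_n1) :
  (Y^T *m B *m Y) i j = \sum_(q < n) \sum_(p < n) Y p i * B p q * Y q j.
Proof.
rewrite mxE; apply: eq_bigr => q _; rewrite mxE mulr_suml.
by apply: eq_bigr => p _; rewrite mxE.
Qed.

Lemma congr_diag (i : 'I_n1) : ordge v ((Y^T *m B *m Y) i i) (A i).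
Proof.
rewrite congr_mxE sum_diag_pairs; apply: ordgeD.
  apply: ordge_sum => p _; have [->|le_ip] := trig_support p i.
    by rewrite !mul0r; exact: ordge0.
  have := ordgeM (inOM (Yo p i) (Yo p i)) (inS_diag p).
  by rewrite add0r mulrAC; apply: ordgeW.
apply: ordge_sum => q _; apply: ordge_sum => p _.
have Bqp : B q p = B p q by rewrite -[in LHS]Bsym mxE.
have -> : Y p i * B p q * Y q i + Y q i * B q p * Y p i = Y p i * Y q i * (2 * B p q).
  by rewrite Bqp; ring.
have [->|le_ip] := trig_support p i; first by rewrite !mul0r; exact: ordge0.
have [->|le_iq] := trig_support q i; first by rewrite mulr0 !mul0r; exact: ordge0.
have := ordgeM (inOM (Yo p i) (Yo q i))
  (ordge2_half (ordge2W (lerD le_ip le_iq) (inS_offdiag p q))).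
by rewrite add0r.
Qed.

Lemma congr_offdiag (i j : 'I_n1) :
  ordge2 v (2 * (Y^T *m B *m Y) i j) (A i + A j).
Proof.
rewrite congr_mxE mulr_sumr; apply: ordge2_sum => q _.
rewrite mulr_sumr; apply: ordge2_sum => p _.
have -> : 2 * (Y p i * B p q * Y q j) = 2 * B p q * (Y p i * Y q j) by ring.
have [->|le_ip] := trig_support p i; first by rewrite mul0r !mulr0 /ordge2 eqxx.
have [->|le_jq] := trig_support q j; first by rewrite !mulr0 /ordge2 eqxx.
have := ordge2M (inS_offdiag p q) (inOM (Yo p i) (Yo q j)).
by rewrite mulr0 addr0; apply: ordge2W; exact: lerD.
Qed.

Lemma inS_trig_congr : (n1 <= n)%N -> inS v (Y^T *m B *m Y) (take n1 a).
Proof.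
move=> le_n1n; case: (aB) => size_a sorted_a _; split.
- by rewrite size_takel // size_a.
- exact: take_sorted.
- move=> i j _; rewrite !nth_take //.
  by split; [exact: congr_diag | exact: congr_offdiag].
Qed.

End TrigCongruence.

Lemma SS_leading_block n n1 (le_n1n : (n1 <= n)%N) (B : 'M[F]_n) a :
  B^T = B -> SS v B a ->
  SS v (mxsub (widen_ord le_n1n) (widen_ord le_n1n) B) (take n1 a).
Proof.
move=> Bsym [U [U_GLo aU]].
pose E : 'M[F]_(n, n1) := colsub (widen_ord le_n1n) 1%:M.
have EBE : mxsub (widen_ord le_n1n) (widen_ord le_n1n) B = E^T *m B *m E.
  by rewrite trmx_mxsub trmx1 -rowsubE -mxsub_mul mulmx1.
pose X := invmx U *m E.
have UX : U *m X = E.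
  rewrite /X mulmxA mulmxV ?mul1mx // unitmxE unitfE.
  by case: U_GLo => _ /andP [].
have Xo : integral_mx X.
  apply: integral_mxM (integral_invmx U_GLo) _ => i j.
  by rewrite mxE; exact: integral_mx1.
have [V V_GLo XV_trig] := col_reduce_trig X.
exists V; split => //; rewrite EBE.
have -> : V^T *m (E^T *m B *m E) *m V = (X *m V)^T *m (U^T *m B *m U) *m (X *m V).
  by rewrite -UX !trmx_mul !mulmxA.
apply: inS_trig_congr => //.
- by rewrite !trmx_mul trmxK Bsym !mulmxA.
- by case: V_GLo => Vo _; exact: integral_mxM.
Qed.

End Valuation.

Lemma lexle_cat_take (s b t : seq nat) : lexle (s ++ b) t -> lexle s (take (size s) t).
Proof.
elim: s t => [|x s IHs] [|y t] //=.
by case/orP => [->//|/andP [/eqP -> le_sbt]]; rewrite ltnn eqxx IHs.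
Qed.

Lemma lexle_anti (s t : seq nat) : size s = size t -> lexle s t -> lexle t s -> s = t.
Proof.
elim: s t => [|x s IHs] [|y t] //= [size_st].
case/orP=> [lt_xy|/andP [/eqP <- le_st]] /orP [lt_yx|/andP [/eqP eq_yx le_ts]].
- by move: (ltn_trans lt_xy lt_yx); rewrite ltnn.
- by move: lt_xy; rewrite eq_yx ltnn.
- by move: lt_yx; rewrite ltnn.
- by rewrite (IHs t).
Qed.

Lemma bent_sym (F : fieldType) (b : blk F) i j : bent b i j = bent b j i.
Proof. by case: b => [k u|k a b c] /=; rewrite eq_sym; case: eqP => // ->. Qed.

Lemma ent_sym (F : fieldType) (bs : seq (blk F)) i j : ent bs i j = ent bs j i.
Proof.
elim: bs i j => [|b bs IHbs] i j //=.
by rewrite andbC bent_sym [((_ <= j) && _)%N]andbC IHbs.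
Qed.

Lemma mxOf_sym (F : fieldType) (bs : seq (blk F)) : (mxOf bs)^T = mxOf bs.
Proof. by apply/matrixP => i j; rewrite !mxE ent_sym. Qed.

Lemma ent_take (F : fieldType) (bs : seq (blk F)) k i j :
  (i < degs (take k bs))%N -> (j < degs (take k bs))%N ->
  ent (take k bs) i j = ent bs i j.
Proof.
elim: bs k i j => [|b bs IHbs] [|k] i j //=; rewrite /degs /= -/(degs _) => lt_i lt_j.
case: ifP => // _; case: ifP => // /andP [le_bi le_bj].
by apply: IHbs; lia.
Qed.

Lemma degs_take_le (F : fieldType) (bs : seq (blk F)) k : (degs (take k bs) <= degs bs)%N.
Proof. by rewrite -{2}(cat_take_drop k bs) /degs map_cat sumn_cat leq_addr. Qed.

Theorem lemma2p1 (F : fieldType) (v : F -> int) (HF : dyadic_field v)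
  (bs : seq (blk F)) (Hr : (0 < size bs)%N) (Hpo : preoptimal v bs)
  (g g1 : seq nat)
  (Hg : isGK v (mxOf bs) g)
  (Hg1 : isGK v (mxOf (take (size bs).-1 bs)) g1) :
  lexle (take (degs (take (size bs).-1 bs)) g) g1 /\
  ((exists b : seq nat, SS v (mxOf bs) (g1 ++ b)) ->
     g1 = take (degs (take (size bs).-1 bs)) g).
Proof.
set n1 := degs (take (size bs).-1 bs).
have [gB g_max] := Hg; have [g1B1 g1_max] := Hg1.
have le_n1n : (n1 <= degs bs)%N := degs_take_le bs (size bs).-1.
have B1E : mxOf (take (size bs).-1 bs) =
           mxsub (widen_ord le_n1n) (widen_ord le_n1n) (mxOf bs).
  by apply/matrixP => i j; rewrite !mxE ent_take.
have le_g_g1 : lexle (take n1 g) g1.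
  by apply: g1_max; rewrite B1E; apply: SS_leading_block => //; exact: mxOf_sym.
split=> // -[b g1bB].
have size_g1 : size g1 = n1 by case: g1B1 => U [_ [-> _ _]].
have size_g : size g = degs bs by case: gB => U [_ [-> _ _]].
apply: lexle_anti le_g_g1; first by rewrite size_takel ?size_g.
by rewrite -size_g1; exact: lexle_cat_take (g_max _ g1bB).
Qed.
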